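(* Let $\mathfrak{X}=(X,\{R_0,R_1,R_2,R_3,R_4\})$ be a skew-symmetric $4$-class association scheme with $R_1^\top=R_2$ and $R_3^\top=R_4$, and suppose that the character table of $\mathfrak X$ is of type $1$ or of type $2$ (in the sense described in the context). Then for each $i\in\{1,2\}$ the digraph $(X,R_i\cup R_{i+2})$ has $5$ distinct eigenvalues.
   Context: An association scheme on a finite set $X$ is a partition of $X\times X$ into relations $R_0$ (diagonal), $R_1,\dots,R_d$ closed under transposition, with constant intersection numbers; skew-symmetric means $R_0$ is the only symmetric relation. Schemes with $\le4$ classes are commutative; the Bose–Mesner algebra (span of the $01$ adjacency matrices $A_i$) has primitive idempotents $E_j$ with $A_iE_j=p_i(j)E_j$, and the character table $P$ has $(j,i)$-entry $p_i(j)$. The symmetrization $\tilde{\mathfrak X}=(X,\{R_0,R_1\cup R_2,R_3\cup R_4\})$ is a $2$-class scheme; write its character table (rows $\tilde E_0,\tilde E_1,\tilde E_2$, columns $R_0,R_1\cup R_2,R_3\cup R_4$) as $(1,k_1,k_2)$, $(1,r_1,t_1)$, $(1,r_2,t_2)$, with multiplicities $1,m_1,m_2$ ($m_j=\operatorname{rank}\tilde E_j$), and $n=|X|=1+k_1+k_2$. It is known that the primitive idempotents $E_0,\dots,E_4$ of $\mathfrak X$ can be ordered so that the character table of $\mathfrak X$ (columns $A_0,\dots,A_4$) has rows $(1,k_1/2,k_1/2,k_2/2,k_2/2)$, $(1,\rho,\bar\rho,\tau,\bar\tau)$, $(1,\sigma,\bar\sigma,\omega,\bar\omega)$, $(1,\bar\sigma,\sigma,\bar\omega,\omega)$,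 $(1,\bar\rho,\rho,\bar\tau,\tau)$ with multiplicities $1,m_1/2,m_1/2,m_2/2,m_2/2$, and one of the following holds. Type 1: $\rho=r_1/2$, $\sigma=(r_2+\sqrt{-b})/2$, $\tau=(t_1+\sqrt{-z})/2$, $\omega=t_2/2$ with $b=nk_1/m_2$, $z=nk_2/m_1$. Type 2: $\rho=(r_1+\sqrt{-y})/2$, $\sigma=r_2/2$, $\tau=t_1/2$, $\omega=(t_2+\sqrt{-c})/2$ with $y=nk_1/m_1$, $c=nk_2/m_2$. Type 3: $\rho=(r_1+\sqrt{-y})/2$, $\tau=(t_1+\sqrt{-z})/2$, $\sigma=(r_2+\sqrt{-b})/2$, $\omega=(t_2-\sqrt{-c})/2$ with $b,c,y,z>0$. Eigenvalues of a digraph $(X,R)$ are those of its $01$ adjacency matrix. *)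

From HB Require Import structures.
From mathcomp Require Import all_boot all_order all_algebra algC.
Set Implicit Arguments. Unset Strict Implicit. Unset Printing Implicit Defensive.
Import Order.TTheory GRing.Theory Num.Theory.
Local Open Scope ring_scope.

(* A 4-class scheme on X = 'I_n is given by the map [rel] sending (x,y) to the
   index i of the relation R_i containing (x,y). *)

Definition I0 : 'I_5 := inord 0.
Definition I1 : 'I_5 := inord 1.
Definition I2 : 'I_5 := inord 2.
Definition I3 : 'I_5 := inord 3.
Definition I4 : 'I_5 := inord 4.
Definition J0 : 'I_3 := inord 0.
Definition J1 : 'I_3 := inord 1.
Definition J2 : 'I_3 := inord 2.

Section Defs.
Variables (n d : nat).
Implicit Types (rel : 'I_n -> 'I_n -> 'I_d.+1).

Definition Rel rel (i : 'I_d.+1) : 'I_n -> 'I_n -> bool := fun x y => rel x y == i.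

Definition is_assoc_scheme rel : Prop :=
  [/\ (forall i, exists x y, rel x y = i),
      (forall x y, (rel x y == ord0) = (x == y)),
      (forall i, exists j, forall x y, Rel rel i x y = Rel rel j y x)
    & (forall i j k, exists p : nat, forall x y, rel x y = k ->
         #|[set z | Rel rel i x z && Rel rel j z y]| = p)].

Definition skew_symmetric rel : Prop :=
  forall i, i != ord0 -> ~ (forall x y, Rel rel i x y = Rel rel i y x).

Definition adj_mx (R : 'I_n -> 'I_n -> bool) : 'M[algC]_n :=
  \matrix_(x, y) (R x y)%:R.

Definition adj rel (i : 'I_d.+1) : 'M[algC]_n := adj_mx (Rel rel i).

Definition in_span m (B : 'I_m -> 'M[algC]_n) (M : 'M[algC]_n) : Prop :=
  exists c : 'I_m -> algC, M = \sum_(k < m) c k *: B k.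

Definition prim_idem m (B : 'I_m -> 'M[algC]_n) (E : 'M[algC]_n) : Prop :=
  [/\ in_span B E, E *m E = E, E != 0 &
      forall F, in_span B F -> F *m F = F -> F *m E = F -> F = 0 \/ F = E].

Definition prim_idem_family m k (B : 'I_m -> 'M[algC]_n) (E : 'I_k -> 'M[algC]_n) : Prop :=
  [/\ (forall j, prim_idem B (E j)),
      (forall j j', j != j' -> E j *m E j' = 0)
    & \sum_(j < k) E j = 1%:M].

Definition has_char_table m k (B : 'I_m -> 'M[algC]_n) (E : 'I_k -> 'M[algC]_n)
    (P : 'I_k -> 'I_m -> algC) : Prop :=
  forall j i, B i *m E j = P j i *: E j.

Definition num_distinct_eigenvalues_eq (M : 'M[algC]_n) (N : nat) : Prop :=
  exists s : seq algC, [/\ uniq s, size s = N & forall a, eigenvalue M a = (a \in s)].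

End Defs.

Definition tab_of (rows : seq (seq algC)) {m k : nat} : 'I_k -> 'I_m -> algC :=
  fun j i => nth 0 (nth [::] rows j) i.

Definition sym_adj n (rel : 'I_n -> 'I_n -> 'I_5) (i : 'I_3) : 'M[algC]_n :=
  match val i with
  | 0%N => adj rel I0
  | 1%N => adj rel I1 + adj rel I2
  | _ => adj rel I3 + adj rel I4
  end.

Definition sym_table (k1 k2 r1 t1 r2 t2 : algC) : 'I_3 -> 'I_3 -> algC :=
  tab_of [:: [:: 1; k1; k2]; [:: 1; r1; t1]; [:: 1; r2; t2]].

Definition scheme_table (k1 k2 rho sigma tau omega : algC) : 'I_5 -> 'I_5 -> algC :=
  tab_of [:: [:: 1; k1 / 2; k1 / 2; k2 / 2; k2 / 2];
             [:: 1; rho; rho^*; tau; tau^*];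
             [:: 1; sigma; sigma^*; omega; omega^*];
             [:: 1; sigma^*; sigma; omega^*; omega];
             [:: 1; rho^*; rho; tau^*; tau]].

Definition type1_cond (n : nat) (k1 k2 r1 t1 r2 t2 : algC) (m1 m2 : nat)
    (rho sigma tau omega : algC) : Prop :=
  let b := n%:R * k1 / m2%:R in let z := n%:R * k2 / m1%:R in
  [/\ rho = r1 / 2, sigma = (r2 + sqrtC (- b)) / 2,
      tau = (t1 + sqrtC (- z)) / 2 & omega = t2 / 2].

Definition type2_cond (n : nat) (k1 k2 r1 t1 r2 t2 : algC) (m1 m2 : nat)
    (rho sigma tau omega : algC) : Prop :=
  let y := n%:R * k1 / m1%:R in let c := n%:R * k2 / m2%:R in
  [/\ rho = (r1 + sqrtC (- y)) / 2, sigma = r2 / 2,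
      tau = t1 / 2 & omega = (t2 + sqrtC (- c)) / 2].

(* The character table of the scheme is of the type given by [cond]:
   the symmetrization has (in some ordering of its primitive idempotents)
   character table rows (1,k1,k2),(1,r1,t1),(1,r2,t2) with multiplicities
   1,m1,m2, and the primitive idempotents of the scheme can be ordered so
   that its character table is [scheme_table] with multiplicities
   1,m1/2,m1/2,m2/2,m2/2 and rho,sigma,tau,omega satisfying [cond]. *)
Definition char_table_of_type n (rel : 'I_n -> 'I_n -> 'I_5)
  (cond : nat -> algC -> algC -> algC -> algC -> algC -> algC -> nat -> nat ->
          algC -> algC -> algC -> algC -> Prop) : Prop :=
  exists (Et : 'I_3 -> 'M[algC]_n) (k1 k2 r1 t1 r2 t2 : algC) (m1 m2 : nat),
  [/\ prim_idem_family (sym_adj rel) Et,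
      has_char_table (sym_adj rel) Et (sym_table k1 k2 r1 t1 r2 t2),
      [/\ \rank (Et J0) = 1%N, \rank (Et J1) = m1 & \rank (Et J2) = m2] &
  exists (E : 'I_5 -> 'M[algC]_n) (rho sigma tau omega : algC),
  [/\ prim_idem_family (adj rel) E,
      has_char_table (adj rel) E (scheme_table k1 k2 rho sigma tau omega),
      [/\ \rank (E I0) = 1%N, (2 * \rank (E I1))%N = m1, (2 * \rank (E I2))%N = m2,
          (2 * \rank (E I3))%N = m2 & (2 * \rank (E I4))%N = m1] &
      cond n k1 k2 r1 t1 r2 t2 m1 m2 rho sigma tau omega]].

From HB Require Import structures.
From mathcomp Require Import all_boot all_order all_algebra algC.
From mathcomp Require Import algnum ring.
Set Implicit Arguments. Unset Strict Implicit. Unset Printing Implicit Defensive.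
Import Order.TTheory GRing.Theory Num.Theory.
Local Open Scope ring_scope.

(* Write theta_j for the eigenvalue of A_1 + A_3 on E_j.  In a table of type 1 the row
   sums vanish, so t_1 = -1 - r_1 and t_2 = -1 - r_2, and the theta_j are
   (k_1 + k_2)/2, (-1 + i sqrt z)/2, (-1 + i sqrt b)/2 and the conjugates of the last two;
   those of A_2 + A_4 are their complex conjugates.  They are distinct unless z = b.  In
   that case the trace identities tr A_1 = tr A_1^2 = 0 (the latter by skew-symmetry),
   together with n = 1 + k_1 + k_2 = 1 + m_1 + m_2, force z = b = n and
   G^2 + 2G = k_1 + k_2 for G = r_1 - 1 - r_2.  Then the algebraic integer
   theta_1 theta_4 - g - g^2, where g = rho + omega = G/2, equals 1/2: a contradiction.
   Type 2 is type 1 with the roles of R_1, R_2 and R_3, R_4 exchanged. *)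

(** * Eigenvalues and primitive idempotents *)

Section Eigenvalues.
Variable n : nat.
Implicit Types (A E M : 'M[algC]_n).

Lemma mxtrace_idem A : A *m A = A -> \tr A = (\rank A)%:R.
Proof.
move=> AA; rewrite -{1}(mulmx_base A) mxtrace_mulC.
suff -> : row_base A *m col_base A = 1%:M by rewrite mxtrace1.
move: (col_base A) (row_base A) (mulmx_base A) (col_base_full A) (row_base_free A).
move=> C R CR /row_fullP[C' C'C] /row_freeP[R' RR'].
rewrite -CR in AA; have := congr1 (fun X => C' *m X *m R') AA.
by rewrite !mulmxA C'C !mul1mx -!mulmxA RR' !mulmx1.
Qed.

Lemma eigenvalue_mul_neq0 M E a : E != 0 -> E *m M = a *: E -> eigenvalue M a.
Proof.
case/matrix0Pn=> i [j Eij] EM; apply/eigenvalueP; exists (row i E).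
  by rewrite -row_mul EM linearZ.
by apply/rV0Pn; exists j; rewrite mxE.
Qed.

Lemma eigenvalue_intmx_Aint (M : 'M[int]_n) a :
  eigenvalue (map_mx intr M) a -> a \in Aint.
Proof.
rewrite eigenvalue_root_char -map_char_poly => root_a.
apply: root_monic_Aint root_a _ _; first exact/monic_map/char_poly_monic.
by apply/polyOverP => i; rewrite coef_map /= rpred_int.
Qed.

Lemma eigenvalue_adj_mx_Aint (R : 'I_n -> 'I_n -> bool) a :
  eigenvalue (adj_mx R) a -> a \in Aint.
Proof.
have -> : adj_mx R = map_mx intr (\matrix_(x, y) (R x y)%:R : 'M[int]_n).
  by apply/matrixP => x y; rewrite !mxE; case: (R x y).
exact: eigenvalue_intmx_Aint.
Qed.

End Eigenvalues.

Lemma scalemxIl m p (X : 'M[algC]_(m, p)) : X != 0 -> injective ( *:%R^~ X).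
Proof.
move=> X_neq0 a b /eqP; rewrite -subr_eq0 -scalerBl scaler_eq0 (negbTE X_neq0) orbF.
by rewrite subr_eq0 => /eqP.
Qed.

Section CharTable.
Variables (n m k : nat) (B : 'I_m -> 'M[algC]_n) (E : 'I_k -> 'M[algC]_n).
Variable P : 'I_k -> 'I_m -> algC.
Hypotheses (famE : prim_idem_family B E) (tabP : has_char_table B E P).

Lemma idem_neq0 j : E j != 0.
Proof. by case: famE => primE _ _; case: (primE j). Qed.

Lemma idem_sqr j : E j *m E j = E j.
Proof. by case: famE => primE _ _; case: (primE j). Qed.

Lemma idem_orth j l : j != l -> E j *m E l = 0.
Proof. by case: famE => _ orthE _; apply: orthE. Qed.

Lemma sum_idem : \sum_j E j = 1%:M.
Proof. by case: famE. Qed.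

Section EigenDecomposition.
Variables (M : 'M[algC]_n) (th : 'I_k -> algC).
Hypothesis eigM : forall j, M *m E j = th j *: E j.

Lemma eigen_decomp : M = \sum_j th j *: E j.
Proof.
rewrite -[M]mulmx1 -sum_idem mulmx_sumr.
by apply: eq_bigr => j _; rewrite eigM.
Qed.

Lemma idem_mul_eigen l : E l *m M = th l *: E l.
Proof.
rewrite eigen_decomp mulmx_sumr (bigD1 l) //= big1 ?addr0.
  by rewrite -scalemxAr idem_sqr.
by move=> j jl; rewrite -scalemxAr idem_orth 1?eq_sym // scaler0.
Qed.

Lemma mxtrace_eigen : \tr M = \sum_j th j * (\rank (E j))%:R.
Proof.
rewrite eigen_decomp raddf_sum; apply: eq_bigr => j _.
by rewrite /= mxtraceZ mxtrace_idem // idem_sqr.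
Qed.

Lemma eigenvalue_eigenP a : eigenvalue M a <-> exists j, a = th j.
Proof.
split=> [/eigenvalueP[v vM v_neq0] | [j ->]]; last first.
  exact: eigenvalue_mul_neq0 (idem_neq0 j) (idem_mul_eigen j).
have [j vEj] : exists j, v *m E j != 0.
  apply/existsP; apply: contraNT v_neq0; rewrite negb_exists => /forallP vE0.
  rewrite -[v]mulmx1 -sum_idem mulmx_sumr big1 // => j _.
  by apply/eqP; rewrite -[_ == _]negbK vE0.
exists j; apply: (scalemxIl vEj).
by rewrite scalemxAl -vM -mulmxA eigM scalemxAr.
Qed.

Lemma num_distinct_eigenvalues_eigen :
  uniq [seq th j | j <- enum 'I_k] -> num_distinct_eigenvalues_eq M k.
Proof.
move=> uniq_th; exists [seq th j | j <- enum 'I_k].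
split=> [//|| a]; first by rewrite size_map size_enum_ord.
apply/idP/mapP => [/eigenvalue_eigenP[j ->] | [j _ ->]]; first by exists j; rewrite ?mem_enum.
by apply/eigenvalue_eigenP; exists j.
Qed.

End EigenDecomposition.

Lemma char_table_rows_neq j l : j != l -> ~ (forall i, P j i = P l i).
Proof.
move=> jl eqP_jl; have [c Ej] : in_span B (E j) by case: famE => primE _ _; case: (primE j).
(* As [E j] is a combination of the [B i], equal rows [j], [l] give [E j *m E l = E l]. *)
have Ej_mul l' : E j *m E l' = (\sum_i c i * P l' i) *: E l'.
  rewrite {1}Ej mulmx_suml scaler_suml; apply: eq_bigr => i _.
  by rewrite -scalemxAl tabP scalerA.
have sum_c : \sum_i c i * P j i = 1.
  by apply/esym/(scalemxIl (idem_neq0 j)); rewrite /= -Ej_mul idem_sqr scale1r.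
have := Ej_mul l; rewrite idem_orth // (eq_bigr (fun i => c i * P j i)) => [|i _].
  by rewrite sum_c scale1r => /esym/eqP; rewrite (negbTE (idem_neq0 l)).
by rewrite eqP_jl.
Qed.

Lemma char_table_row_eigen i j (v : 'rV_n) c :
  v *m B i = c *: v -> v *m E j != 0 -> P j i = c.
Proof.
move=> vB vEj; apply: (scalemxIl vEj).
by rewrite scalemxAr -tabP mulmxA vB scalemxAl.
Qed.

Lemma char_tableD i i' j : (B i + B i') *m E j = (P j i + P j i') *: E j.
Proof. by rewrite mulmxDl !tabP scalerDl. Qed.

Lemma char_table_sqr i j : (B i *m B i) *m E j = P j i ^+ 2 *: E j.
Proof. by rewrite -mulmxA tabP -scalemxAr tabP scalerA expr2. Qed.

Lemma eigenvalue_char_table i j : eigenvalue (B i) (P j i).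
Proof. by apply/(eigenvalue_eigenP (tabP^~ i)); exists j. Qed.

End CharTable.

(** * Feasibility conditions for skew-symmetric schemes *)

(* [mu j] is the multiplicity (rank) of the [j]-th idempotent, [ord0] the trivial one. *)
Record feasible_char_table n d (P : 'I_d.+1 -> 'I_d.+1 -> algC) (mu : 'I_d.+1 -> nat)
  : Prop := FeasibleCharTable {
  valency_gt0 : forall i, 0 < P ord0 i;
  sum_valency : \sum_i P ord0 i = n%:R;
  row_sum_eq0 : forall j, j != ord0 -> \sum_i P j i = 0;
  mult_gt0 : forall j, (0 < mu j)%N;
  sum_mult : (\sum_j mu j)%N = n;
  trace_eq0 : forall i, i != ord0 -> \sum_j P j i * (mu j)%:R = 0;
  trace_sqr_eq0 : forall i, i != ord0 -> \sum_j P j i ^+ 2 * (mu j)%:R = 0;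
  char_table_Aint : forall j i, P j i \in Aint
}.

Section Scheme.
Variables (n d : nat) (rel : 'I_n -> 'I_n -> 'I_d.+1).
Hypothesis scheme : is_assoc_scheme rel.

Local Notation ones := (const_mx 1 : 'rV[algC]_n).

Lemma rel_diag x : rel x x = ord0.
Proof. by case: scheme => _ diag _ _; apply/eqP; rewrite diag. Qed.

Lemma adjE i x y : adj rel i x y = (rel x y == i)%:R.
Proof. by rewrite mxE. Qed.

Lemma mxtrace_adj i : i != ord0 -> \tr (adj rel i) = 0.
Proof.
by move=> i0; apply: big1 => x _; rewrite adjE rel_diag eq_sym (negbTE i0).
Qed.

Lemma mxtrace_adj_sqr i :
  skew_symmetric rel -> i != ord0 -> \tr (adj rel i *m adj rel i) = 0.
Proof.
move=> skew i0; case: scheme => _ _ transp _; have [j relT] := transp i.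
have ji : j != i by apply: contra_notN (skew i i0) => /eqP ij x y; rewrite relT -ij.
(* No [z] has both [(x, z)] in [R_i] and [(z, x)] in [R_i], i.e. [(x, z)] in [R_j]. *)
apply: big1 => x _; rewrite mxE; apply: big1 => z _.
rewrite !adjE -[rel z x == i]/(Rel rel i z x) relT /Rel.
by case: eqP => [->|]; rewrite ?mul0r // eq_sym (negbTE ji) mulr0.
Qed.

Lemma sum_adj : \sum_i adj rel i = const_mx 1.
Proof.
apply/matrixP => x y; rewrite summxE mxE (bigD1 (rel x y)) //= big1 ?addr0.
  by rewrite adjE eqxx.
by move=> i; rewrite adjE eq_sym => /negbTE ->.
Qed.

Lemma ones_neq0 : ones != 0.
Proof.
case: scheme => nonempty _ _ _; have [x _] := nonempty ord0.
by apply/rV0Pn; exists x; rewrite mxE oner_neq0.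
Qed.

Lemma ones_mul_adj i : exists2 c : nat, ones *m adj rel i = c%:R *: ones & (0 < c)%N.
Proof.
case: scheme => nonempty _ transp inters; have [j relT] := transp i.
have [c count_c] := inters j i ord0.
have col_count y : #|[set x | rel x y == i]| = c.
  rewrite -(count_c y y) ?rel_diag //; apply: eq_card => x.
  by rewrite !inE -relT /Rel andbb.
exists c.
  apply/rowP => y; rewrite !mxE mulr1 -(col_count y) -sum1dep_card natr_sum [RHS]big_mkcond.
  by apply: eq_bigr => x _; rewrite !mxE mul1r /Rel; case: eqP.
have [x [y relxy]] := nonempty i.
by rewrite -(col_count y); apply/card_gt0P; exists x; rewrite inE relxy.
Qed.

Lemma ones_mul_const : ones *m const_mx 1 = n%:R *: ones.
Proof.
apply/rowP => y; rewrite !mxE (eq_bigr (fun _ => 1)) => [|x _]; last by rewrite !mxE mulr1.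
by rewrite sumr_const card_ord mulr1.
Qed.

Section Idempotents.
Variables (E : 'I_d.+1 -> 'M[algC]_n) (P : 'I_d.+1 -> 'I_d.+1 -> algC).
Hypotheses (famE : prim_idem_family (adj rel) E) (tabP : has_char_table (adj rel) E P).

Lemma valency_row l i :
  ones *m E l != 0 -> exists2 c : nat, P l i = c%:R & (0 < c)%N.
Proof.
move=> onesE; have [c onesA c_gt0] := ones_mul_adj i.
by exists c => //; apply: char_table_row_eigen onesA onesE.
Qed.

Lemma valency_rows_eq l l' : ones *m E l != 0 -> ones *m E l' != 0 -> l = l'.
Proof.
move=> onesE onesE'; apply/eqP/negbNE/negP => ll'.
apply: (char_table_rows_neq famE tabP ll') => i.
have [c onesA _] := ones_mul_adj i.
by rewrite (char_table_row_eigen tabP onesA onesE) (char_table_row_eigen tabP onesA onesE').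
Qed.

Lemma exists_ones_mul_idem : exists l, ones *m E l != 0.
Proof.
apply/existsP; apply: contraNT ones_neq0; rewrite negb_exists => /forallP onesE0.
rewrite -[ones]mulmx1 -(sum_idem famE) mulmx_sumr big1 // => l _.
by apply/eqP; rewrite -[_ == _]negbK onesE0.
Qed.

Lemma sum_valency_row l : ones *m E l != 0 -> \sum_i P l i = n%:R.
Proof.
move=> onesE; apply: (scalemxIl ones_neq0).
rewrite -ones_mul_const -sum_adj mulmx_sumr scaler_suml; apply: eq_bigr => i _.
have [c onesA _] := ones_mul_adj i.
by rewrite onesA (char_table_row_eigen tabP onesA onesE).
Qed.

Lemma row_sum_eq0_of_ones l : ones *m E l = 0 -> \sum_i P l i = 0.
Proof.
move=> onesE; apply: (scalemxIl (idem_neq0 famE l)).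
rewrite scale0r scaler_suml -(eq_bigr _ (fun i _ => tabP l i)) -mulmx_suml sum_adj.
have -> : const_mx 1 = (const_mx 1 : 'cV[algC]_n) *m ones.
  by apply/matrixP => x y; rewrite !mxE big_ord1 !mxE mulr1.
by rewrite -mulmxA onesE mulmx0.
Qed.

Lemma feasible_scheme_char_table :
  skew_symmetric rel -> ones *m E ord0 != 0 ->
  feasible_char_table n P (fun j => \rank (E j)).
Proof.
move=> skew onesE0; have eigA i := fun j => tabP j i.
split=> [i | | j j0 | j | | i i0 | i i0 | j i].
- by have [c -> c_gt0] := valency_row i onesE0; rewrite ltr0n.
- exact: sum_valency_row.
- apply: row_sum_eq0_of_ones; apply: contraNeq j0 => onesE.
  by rewrite (valency_rows_eq onesE onesE0).
- by rewrite lt0n mxrank_eq0 (idem_neq0 famE).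
- have eig1 j : 1%:M *m E j = 1 *: E j by rewrite mul1mx scale1r.
  apply/eqP; rewrite -(eqr_nat algC) natr_sum -mxtrace1 (mxtrace_eigen famE eig1).
  by under [X in _ == X]eq_bigr do rewrite mul1r.
- by rewrite -(mxtrace_eigen famE (eigA i)) mxtrace_adj.
- by rewrite -(mxtrace_eigen famE (char_table_sqr tabP i)) mxtrace_adj_sqr.
- exact/eigenvalue_adj_mx_Aint/(eigenvalue_char_table famE tabP).
Qed.

End Idempotents.
End Scheme.

Lemma sqrtCN (C : numClosedFieldType) (x : C) : 0 <= x -> sqrtC (- x) = 'i * sqrtC x.
Proof.
move=> x_ge0; have sx_ge0 : 0 <= sqrtC x by rewrite sqrtC_ge0.
have sx_real : sqrtC x \is Num.real by rewrite ger0_real.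
have -> : - x = ('i * sqrtC x) ^+ 2 by rewrite exprMn sqrCi sqrtCK mulN1r.
apply/sqrCK_P; rewrite ImMil (Creal_ReP _ sx_real) sx_ge0 /=.
apply/negP => lt0; have /Creal_ImP := ltr0_real lt0.
by rewrite ImMil (Creal_ReP _ sx_real) => sx0; rewrite sx0 mulr0 ltxx in lt0.
Qed.

Lemma uniq_sym_quad (R : numDomainType) (s s' : R) :
  0 < s -> 0 < s' -> s != s' -> uniq [:: 0; s; s'; - s'; - s].
Proof.
move=> s_gt0 s'_gt0 ss'.
have Ns_lt0 : - s < 0 by rewrite oppr_lt0.
have Ns'_lt0 : - s' < 0 by rewrite oppr_lt0.
rewrite /= !inE !negb_or eqr_opp [s' == s]eq_sym ss' !(eq_sym 0) /=.
rewrite (gt_eqF s_gt0) (gt_eqF s'_gt0) (lt_eqF Ns_lt0) (lt_eqF Ns'_lt0).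
rewrite (gt_eqF (lt_trans Ns'_lt0 s_gt0)) (gt_eqF (lt_trans Ns_lt0 s_gt0)).
by rewrite (gt_eqF (lt_trans Ns'_lt0 s'_gt0)) (gt_eqF (lt_trans Ns_lt0 s'_gt0)).
Qed.

Lemma uniq_conj_pairs (C : numClosedFieldType) (c s s' : C) :
  c \is Num.real -> 0 < s -> 0 < s' -> s != s' ->
  uniq [:: c; (-1 + 'i * s) / 2; (-1 + 'i * s') / 2; (-1 - 'i * s') / 2; (-1 - 'i * s) / 2].
Proof.
move=> c_real s_gt0 s'_gt0 ss'.
have Im_half y : y \is Num.real -> 'Im (2 * ((-1 + 'i * y) / 2) + 1) = y.
  by move=> y_real; rewrite mulrC divfK ?pnatr_eq0 // addrAC addNr add0r ImMil; apply/Creal_ReP.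
apply: (map_uniq (f := fun x => 'Im (2 * x + 1))).
rewrite /= -!mulrN !Im_half ?rpredN ?gtr0_real //.
rewrite (Creal_ImP _ _) ?rpredD ?rpredM ?rpred_nat ?real1 //.
exact: uniq_sym_quad.
Qed.

Lemma half_notin_Aint : 2^-1 \notin Aint.
Proof.
have half_rat : (2^-1 : algC) \in Crat by rewrite rpredV rpred_nat.
apply/negP => /(Cint_rat_Aint half_rat)/intr_ler_sqr.
by rewrite expr2 ler_pMr ?invr_gt0 ?ltr0n // invf_ge1 ?ltr0n // lt_geF ?ltr1n.
Qed.

Lemma mult_of_equal_ratios (R : numFieldType) (k1 k2 e1 e2 : R) :
  k1 + k2 != 0 -> e1 != 0 -> e2 != 0 ->
  2 * e1 + 2 * e2 = k1 + k2 -> k2 / e1 = k1 / e2 -> e1 = k2 / 2 /\ e2 = k1 / 2.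
Proof.
move=> k12_neq0 e1_neq0 e2_neq0 sum_e /eqP; rewrite eqr_div // => /eqP cross.
have e1E : e1 = k2 / 2.
  by apply: (mulfI k12_neq0); rewrite -{2}sum_e mulrDl -cross; field.
split=> //; apply: (mulfI k12_neq0); rewrite -{2}sum_e mulrDl cross e1E.
by field.
Qed.

Lemma degenerate_trace_identity (R : numFieldType) (k1 k2 r1 r2 : R) :
  k1 != 0 -> k2 != 0 ->
  k1 / 2 + k2 / 2 * r1 + k1 / 2 * r2 = 0 ->
  k1 ^+ 2 / 4 + k2 / 2 * r1 ^+ 2 / 2 + k1 / 2 * (r2 ^+ 2 - (1 + k1 + k2)) / 2 = 0 ->
  (r1 - 1 - r2) ^+ 2 + 2 * (r1 - 1 - r2) = k1 + k2.
Proof.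
move=> k1_neq0 k2_neq0 lin quad.
have r2E : r2 = -1 - k2 * r1 / k1.
  apply: (mulfI k1_neq0); rewrite -[k1 * r2]subr0 -(mulr0 2) -lin.
  by field; rewrite ?k1_neq0.
have key : r1 ^+ 2 * (k1 + k2) + 2 * r1 * k1 - k1 ^+ 2 = 0.
  rewrite -(mulr0 (4 * k1 / k2)) -quad r2E.
  by field; rewrite ?k1_neq0.
apply/eqP; rewrite -subr_eq0 r2E -(mulr0 ((k1 + k2) / k1 ^+ 2)) -key.
by apply/eqP; field; rewrite ?k1_neq0.
Qed.

(** * The character table of a skew-symmetric 4-class scheme *)

Lemma val_I0 : I0 = 0%N :> nat. Proof. by rewrite /I0 inordK. Qed.
Lemma val_I1 : I1 = 1%N :> nat. Proof. by rewrite /I1 inordK. Qed.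
Lemma val_I2 : I2 = 2%N :> nat. Proof. by rewrite /I2 inordK. Qed.
Lemma val_I3 : I3 = 3%N :> nat. Proof. by rewrite /I3 inordK. Qed.
Lemma val_I4 : I4 = 4%N :> nat. Proof. by rewrite /I4 inordK. Qed.
Lemma val_J1 : J1 = 1%N :> nat. Proof. by rewrite /J1 inordK. Qed.
Lemma val_J2 : J2 = 2%N :> nat. Proof. by rewrite /J2 inordK. Qed.

Ltac table_simpl :=
  rewrite /scheme_table /sym_table /tab_of ?val_I0 ?val_I1 ?val_I2 ?val_I3 ?val_I4
    ?val_J1 ?val_J2;
  cbn [nth].

Lemma I0_ord0 : I0 = ord0.
Proof. by apply: val_inj; rewrite /= val_I0. Qed.

Lemma I_neq_I0 : [/\ I1 != I0, I2 != I0, I3 != I0 & I4 != I0].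
Proof. by rewrite -!(inj_eq val_inj) /= val_I0 val_I1 val_I2 val_I3 val_I4. Qed.

Lemma ord5_cases (i : 'I_5) : i = I0 \/ i = I1 \/ i = I2 \/ i = I3 \/ i = I4.
Proof.
case: i => [[|[|[|[|[|//]]]]] lt_i5]; [left | right; left | do 2 right; left
  | do 3 right; left | do 4 right].
all: by apply: val_inj; rewrite /= ?val_I0 ?val_I1 ?val_I2 ?val_I3 ?val_I4.
Qed.

Lemma enum_ord5 : enum 'I_5 = [:: I0; I1; I2; I3; I4].
Proof.
apply: (inj_map val_inj); rewrite val_enum_ord /=.
by rewrite val_I0 val_I1 val_I2 val_I3 val_I4.
Qed.

Lemma sum_ord5 (F : 'I_5 -> algC) : \sum_i F i = F I0 + F I1 + F I2 + F I3 + F I4.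
Proof. by rewrite -big_enum /= enum_ord5 !big_cons big_nil !addrA addr0. Qed.

Lemma addC_conj_real (x : algC) : x + x^* \is Num.real.
Proof. by rewrite CrealE rmorphD /= conjCK addrC. Qed.

Section SchemeTable.
Variables (k1 k2 rho sigma tau omega : algC).
Local Notation P := (scheme_table k1 k2 rho sigma tau omega).

Lemma scheme_table_conj_row l :
  l != I0 -> exists2 l', l' != l & forall i, P l' i = (P l i)^*.
Proof.
case: (ord5_cases l) => [->|[->|[->|[->|->]]]]; rewrite ?eqxx // => _;
  [exists I4 | exists I3 | exists I2 | exists I1].
all: first [ by rewrite -(inj_eq val_inj) /= ?val_I1 ?val_I2 ?val_I3 ?val_I4
           | by move=> i; case: (ord5_cases i) => [->|[->|[->|[->|->]]]]; table_simpl;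
                rewrite ?conjC1 ?conjCK ].
Qed.

Lemma scheme_table_conj_col j :
  k1 \is Num.real -> k2 \is Num.real ->
  P j I2 = (P j I1)^* /\ P j I4 = (P j I3)^*.
Proof.
move=> k1_real k2_real; have half_real x : x \is Num.real -> (x / 2)^* = x / 2.
  by move=> x_real; rewrite conj_Creal // rpredM ?rpredV ?rpred_nat.
by case: (ord5_cases j) => [->|[->|[->|[->|->]]]]; table_simpl; rewrite ?half_real ?conjCK.
Qed.

End SchemeTable.

Lemma feasible_char_table_perm n d (P Q : 'I_d.+1 -> 'I_d.+1 -> algC) mu
    (s : 'I_d.+1 -> 'I_d.+1) :
  injective s -> s ord0 = ord0 -> (forall j i, Q j i = P j (s i)) ->
  feasible_char_table n P mu -> feasible_char_table n Q mu.
Proof.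
move=> s_inj s0 QP [val_gt0 sum_val row_sum mu_gt0 sum_mu tr tr_sqr Aint_P].
have sum_Q j : \sum_i Q j i = \sum_i P j i.
  by rewrite [RHS](reindex_inj s_inj); apply: eq_bigr => i _; rewrite QP.
have s_neq0 i : i != ord0 -> s i != ord0 by move=> i0; rewrite -s0 (inj_eq s_inj).
split=> // [i | | j j0 | i i0 | i i0 | j i]; rewrite ?sum_Q ?QP //.
- by rewrite (row_sum j j0).
- by under eq_bigr do rewrite QP; apply: tr; apply: s_neq0.
- by under eq_bigr do rewrite QP; apply: tr_sqr; apply: s_neq0.
Qed.

Definition swap13 (i : 'I_5) : 'I_5 := nth I0 [:: I0; I3; I4; I1; I2] i.

Lemma swap13K : involutive swap13.
Proof.
move=> i; rewrite /swap13; case: (ord5_cases i) => [->|[->|[->|[->|->]]]].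
all: by rewrite ?val_I0 ?val_I1 ?val_I2 ?val_I3 ?val_I4 /= ?val_I0 ?val_I1 ?val_I2 ?val_I3 ?val_I4.
Qed.

Lemma swap13E : [/\ swap13 I0 = I0, swap13 I1 = I3 & swap13 I3 = I1].
Proof. by rewrite /swap13 val_I0 val_I1 val_I3. Qed.

Lemma scheme_table_swap13 k1 k2 rho sigma tau omega j i :
  scheme_table k2 k1 tau omega rho sigma j i
  = scheme_table k1 k2 rho sigma tau omega j (swap13 i).
Proof.
rewrite /swap13; case: (ord5_cases i) => [->|[->|[->|[->|->]]]];
  rewrite ?val_I0 ?val_I1 ?val_I2 ?val_I3 ?val_I4 /=.
all: by case: (ord5_cases j) => [->|[->|[->|[->|->]]]]; table_simpl.
Qed.

Lemma feasible_order_gt0 n d (P : 'I_d.+1 -> 'I_d.+1 -> algC) mu :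
  feasible_char_table n P mu -> (0 < n)%N.
Proof.
move=> feasP; rewrite -(sum_mult feasP) (bigD1 ord0) //=.
by rewrite addn_gt0 (mult_gt0 feasP).
Qed.

Lemma scheme_table_valencies_gt0 n k1 k2 rho sigma tau omega mu :
  feasible_char_table n (scheme_table k1 k2 rho sigma tau omega) mu -> 0 < k1 /\ 0 < k2.
Proof.
move=> feasP; have := valency_gt0 feasP I1; have := valency_gt0 feasP I3.
rewrite -I0_ord0; table_simpl.
by rewrite !pmulr_lgt0 ?invr_gt0 ?ltr0n.
Qed.

(** * Tables of type 1 *)

Section TypeOne.
Variables (n m1 m2 : nat) (k1 k2 r1 t1 r2 t2 rho sigma tau omega : algC).
Variable mu : 'I_5 -> nat.
Local Notation P := (scheme_table k1 k2 rho sigma tau omega).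
Hypotheses (feasP : feasible_char_table n P mu)
  (mults : [/\ mu I0 = 1%N, (2 * mu I1)%N = m1, (2 * mu I2)%N = m2,
              (2 * mu I3)%N = m2 & (2 * mu I4)%N = m1])
  (reals : [/\ r1 \is Num.real, t1 \is Num.real, r2 \is Num.real & t2 \is Num.real])
  (type1 : type1_cond n k1 k2 r1 t1 r2 t2 m1 m2 rho sigma tau omega).

Local Notation e1 := ((mu I1)%:R : algC).
Local Notation e2 := ((mu I2)%:R : algC).
Local Notation z := (n%:R * k2 / m1%:R).
Local Notation b := (n%:R * k1 / m2%:R).
Local Notation s := (sqrtC z).
Local Notation s' := (sqrtC b).
Local Notation theta j := (P j I1 + P j I3).

Lemma type1_mults_gt0 : 0 < e1 /\ 0 < e2.
Proof. by rewrite !ltr0n !(mult_gt0 feasP). Qed.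

Lemma type1_mults_eq : m1%:R = 2 * e1 /\ m2%:R = 2 * e2.
Proof. by case: mults => _ <- <- _ _; rewrite !natrM. Qed.

Lemma type1_mults_pair : mu I3 = mu I2 /\ mu I4 = mu I1.
Proof.
case: mults => _ mu1 mu2 mu3 mu4.
by split; apply/eqP; rewrite -(eqn_pmul2l (isT : (0 < 2)%N)) ?mu1 ?mu2 ?mu3 ?mu4.
Qed.

Lemma type1_order : n%:R = 1 + k1 + k2 /\ n%:R = 1 + 2 * e1 + 2 * e2.
Proof.
split; first by rewrite -(sum_valency feasP) -I0_ord0 sum_ord5; table_simpl; field.
case: mults type1_mults_pair => mu0 _ _ _ _ [mu3 mu4].
by rewrite -(sum_mult feasP) natr_sum sum_ord5 mu0 mu3 mu4; ring.
Qed.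

Lemma type1_discriminants_gt0 : 0 < z /\ 0 < b.
Proof.
have [k1_gt0 k2_gt0] := scheme_table_valencies_gt0 feasP; have [m1E m2E] := type1_mults_eq.
have n_gt0 := feasible_order_gt0 feasP.
by rewrite m1E m2E; split; apply: divr_gt0; rewrite ?mulr_gt0 ?ltr0n ?(mult_gt0 feasP).
Qed.

Lemma type1_entries :
  [/\ rho = r1 / 2, sigma = (r2 + 'i * s') / 2, tau = (t1 + 'i * s) / 2 & omega = t2 / 2].
Proof.
have [z_gt0 b_gt0] := type1_discriminants_gt0.
by case: type1 => -> -> -> ->; rewrite !sqrtCN ?ltW.
Qed.

Lemma type1_conj_entries :
  [/\ rho^* = r1 / 2, sigma^* = (r2 - 'i * s') / 2, tau^* = (t1 - 'i * s) / 2
    & omega^* = t2 / 2].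
Proof.
have [z_gt0 b_gt0] := type1_discriminants_gt0.
have [r1_real t1_real r2_real t2_real] := reals.
have [-> -> -> ->] := type1_entries.
rewrite !fmorph_div /= !conjC_nat !conjC_rect ?conj_Creal //.
all: by rewrite sqrtC_real ?ltW.
Qed.

Lemma type1_row_sums : t1 = -1 - r1 /\ t2 = -1 - r2.
Proof.
have row0 l : l != I0 -> \sum_i P l i = 0 by rewrite I0_ord0; exact: (row_sum_eq0 feasP).
have [I1_neq0 I2_neq0 _ _] := I_neq_I0.
have := row0 I1 I1_neq0; have := row0 I2 I2_neq0; rewrite !sum_ord5; table_simpl.
have [-> -> -> ->] := type1_conj_entries; have [-> -> -> ->] := type1_entries.
by move=> row2 row1; split; apply/eqP; rewrite -subr_eq0; apply/eqP;
  [rewrite -row1 | rewrite -row2]; field.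
Qed.

Lemma type1_theta :
  [/\ theta I0 = (k1 + k2) / 2, theta I1 = (-1 + 'i * s) / 2, theta I2 = (-1 + 'i * s') / 2,
      theta I3 = (-1 - 'i * s') / 2 & theta I4 = (-1 - 'i * s) / 2].
Proof.
table_simpl; have [t1E t2E] := type1_row_sums.
have [-> -> -> ->] := type1_conj_entries; have [-> -> -> ->] := type1_entries.
by rewrite t1E t2E; split; field.
Qed.

Lemma type1_traces :
  k1 / 2 + e1 * r1 + e2 * r2 = 0 /\
  k1 ^+ 2 / 4 + e1 * r1 ^+ 2 / 2 + e2 * (r2 ^+ 2 - b) / 2 = 0.
Proof.
have [I1_neq0 _ _ _] := I_neq_I0; rewrite I0_ord0 in I1_neq0.
have := trace_eq0 feasP I1_neq0; have := trace_sqr_eq0 feasP I1_neq0.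
rewrite !sum_ord5; table_simpl.
case: mults type1_mults_pair => -> _ _ _ _ [-> ->].
have [-> -> _ _] := type1_conj_entries; have [-> -> _ _] := type1_entries.
have bE : b = - ('i * s') ^+ 2 by rewrite exprMn sqrCi sqrtCK mulN1r opprK.
by move=> quad lin; split; [rewrite -lin | rewrite bE -quad]; field.
Qed.

Lemma type1_degenerate :
  z = b -> b = n%:R /\ (r1 - 1 - r2) ^+ 2 + 2 * (r1 - 1 - r2) = k1 + k2.
Proof.
move=> zb; have [k1_gt0 k2_gt0] := scheme_table_valencies_gt0 feasP.
have [e1_gt0 e2_gt0] := type1_mults_gt0; have [m1E m2E] := type1_mults_eq.
have [nE nE'] := type1_order.
have n_neq0 : n%:R != 0 :> algC by rewrite pnatr_eq0 -lt0n (feasible_order_gt0 feasP).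
have [k1_neq0 k2_neq0] := (lt0r_neq0 k1_gt0, lt0r_neq0 k2_gt0).
have [e1_neq0 e2_neq0] := (lt0r_neq0 e1_gt0, lt0r_neq0 e2_gt0).
have ratio : k2 / e1 = k1 / e2.
  have -> : k2 / e1 = z * (2 / n%:R) by rewrite m1E; field; rewrite n_neq0 e1_neq0.
  by rewrite zb m2E; field; rewrite n_neq0 e2_neq0.
have sum_e : 2 * e1 + 2 * e2 = k1 + k2 by apply: (addrI 1); rewrite !addrA -nE -nE'.
have k12_neq0 := lt0r_neq0 (addr_gt0 k1_gt0 k2_gt0).
have [e1E e2E] := mult_of_equal_ratios k12_neq0 e1_neq0 e2_neq0 sum_e ratio.
have bE : b = n%:R by rewrite m2E e2E; field; rewrite k1_neq0.
have [lin quad] := type1_traces; rewrite e1E e2E in lin quad; rewrite bE nE in quad.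
by split; last exact: degenerate_trace_identity lin quad.
Qed.

Lemma type1_sqrt_neq : s != s'.
Proof.
apply/eqP => ss'; have zb : z = b by rewrite -[z]sqrtCK ss' sqrtCK.
have [bE G_id] := type1_degenerate zb; have [nE _] := type1_order.
have : theta I1 * theta I4 - (P I1 I1 + P I2 I3) - (P I1 I1 + P I2 I3) ^+ 2 \in Aint.
  by rewrite !rpredB ?rpredM ?rpredX ?rpredD ?(char_table_Aint feasP).
have [_ -> _ _ ->] := type1_theta; table_simpl.
have [-> _ _ ->] := type1_entries; have [_ ->] := type1_row_sums.
have sE : ('i * s) ^+ 2 = - n%:R by rewrite exprMn sqrCi sqrtCK zb bE mulN1r.
suff -> : (-1 + 'i * s) / 2 * ((-1 - 'i * s) / 2) - (r1 / 2 + (-1 - r2) / 2)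
          - (r1 / 2 + (-1 - r2) / 2) ^+ 2 = 2^-1 by rewrite (negbTE half_notin_Aint).
rewrite (_ : _ - _ = (1 - ('i * s) ^+ 2 - ((r1 - 1 - r2) ^+ 2 + 2 * (r1 - 1 - r2))) / 4).
  by rewrite sE G_id nE; field.
by field.
Qed.

Theorem type1_eigenvalues_uniq : uniq [seq theta j | j <- enum 'I_5].
Proof.
have [z_gt0 b_gt0] := type1_discriminants_gt0.
have [k1_gt0 k2_gt0] := scheme_table_valencies_gt0 feasP.
rewrite enum_ord5 /=; have [-> -> -> -> ->] := type1_theta.
apply: uniq_conj_pairs; rewrite ?sqrtC_gt0 ?type1_sqrt_neq //.
by rewrite gtr0_real // divr_gt0 ?addr_gt0.
Qed.

End TypeOne.

(** * The digraphs [R_1 ∪ R_3] and [R_2 ∪ R_4] *)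

Definition forces_distinct_eigenvalues
    (cond : nat -> algC -> algC -> algC -> algC -> algC -> algC -> nat -> nat ->
            algC -> algC -> algC -> algC -> Prop) : Prop :=
  forall (n m1 m2 : nat) (k1 k2 r1 t1 r2 t2 rho sigma tau omega : algC) (mu : 'I_5 -> nat),
  feasible_char_table n (scheme_table k1 k2 rho sigma tau omega) mu ->
  [/\ mu I0 = 1%N, (2 * mu I1)%N = m1, (2 * mu I2)%N = m2,
      (2 * mu I3)%N = m2 & (2 * mu I4)%N = m1] ->
  [/\ r1 \is Num.real, t1 \is Num.real, r2 \is Num.real & t2 \is Num.real] ->
  cond n k1 k2 r1 t1 r2 t2 m1 m2 rho sigma tau omega ->
  uniq [seq scheme_table k1 k2 rho sigma tau omega j I1
            + scheme_table k1 k2 rho sigma tau omega j I3 | j <- enum 'I_5].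

Lemma type1_forces_distinct_eigenvalues : forces_distinct_eigenvalues type1_cond.
Proof.
by move=> n m1 m2 k1 k2 r1 t1 r2 t2 rho sigma tau omega mu; apply: type1_eigenvalues_uniq.
Qed.

Lemma type2_forces_distinct_eigenvalues : forces_distinct_eigenvalues type2_cond.
Proof.
move=> n m1 m2 k1 k2 r1 t1 r2 t2 rho sigma tau omega mu feasP mults [r1R t1R r2R t2R] type2.
(* Exchanging [R_1, R_2] with [R_3, R_4] turns the type 2 table into a type 1 table. *)
have feasQ : feasible_char_table n (scheme_table k2 k1 tau omega rho sigma) mu.
  apply: feasible_char_table_perm (can_inj swap13K) _ _ feasP.
    by rewrite -I0_ord0; case: swap13E.
  exact: scheme_table_swap13.
have type1 : type1_cond n k2 k1 t1 r1 t2 r2 m1 m2 tau omega rho sigma.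
  by case: type2 => rhoE sigmaE tauE omegaE; split; [exact: tauE | exact: omegaE
    | exact: rhoE | exact: sigmaE].
have := type1_eigenvalues_uniq feasQ mults (And4 t1R r1R t2R r2R) type1.
congr uniq; apply: eq_map => j; case: swap13E => _ swap1 swap3.
by rewrite !(scheme_table_swap13 k1 k2 rho sigma tau omega) swap1 swap3 addrC.
Qed.

Lemma scheme_table_trivial_idem n (rel : 'I_n -> 'I_n -> 'I_5) E k1 k2 rho sigma tau omega :
  is_assoc_scheme rel -> prim_idem_family (adj rel) E ->
  has_char_table (adj rel) E (scheme_table k1 k2 rho sigma tau omega) ->
  (const_mx 1 : 'rV[algC]_n) *m E I0 != 0.
Proof.
move=> scheme famE tabP; have [l onesE] := exists_ones_mul_idem scheme famE.
have [<- // | l_neq0] := eqVneq l I0.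
(* Row [l] consists of valencies, so it is real and equals its conjugate row. *)
have [l' l'l conj_l'] := scheme_table_conj_row k1 k2 rho sigma tau omega l_neq0.
exfalso; apply: (char_table_rows_neq famE tabP l'l) => i.
have [c valc _] := valency_row scheme tabP i onesE.
by rewrite conj_l' valc conjC_nat.
Qed.

Lemma adj_mx_orb n d (rel : 'I_n -> 'I_n -> 'I_d.+1) i i' :
  i != i' -> adj_mx (fun x y => Rel rel i x y || Rel rel i' x y) = adj rel i + adj rel i'.
Proof.
move=> ii'; apply/matrixP => x y; rewrite !mxE /Rel.
by case: eqP => [->|_]; rewrite ?(negbTE ii') ?addr0 ?add0r.
Qed.

Lemma sym_adjE n (rel : 'I_n -> 'I_n -> 'I_5) :
  sym_adj rel J1 = adj rel I1 + adj rel I2 /\ sym_adj rel J2 = adj rel I3 + adj rel I4.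
Proof.
rewrite /sym_adj; have -> : val J1 = 1%N by exact: val_J1.
by have -> : val J2 = 2%N by exact: val_J2.
Qed.

Lemma sym_table_real n (rel : 'I_n -> 'I_n -> 'I_5) E Et k1 k2 rho sigma tau omega r1 t1 r2 t2 :
  prim_idem_family (adj rel) E ->
  has_char_table (adj rel) E (scheme_table k1 k2 rho sigma tau omega) ->
  k1 \is Num.real -> k2 \is Num.real ->
  prim_idem_family (sym_adj rel) Et ->
  has_char_table (sym_adj rel) Et (sym_table k1 k2 r1 t1 r2 t2) ->
  [/\ r1 \is Num.real, t1 \is Num.real, r2 \is Num.real & t2 \is Num.real].
Proof.
move=> famE tabP k1R k2R famEt tabPt.
(* By the table of the scheme, the eigenvalues of [A_1 + A_2] and [A_3 + A_4] are [x + x^*]. *)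
have conj_pair_real i i' :
    (forall j, scheme_table k1 k2 rho sigma tau omega j i'
               = (scheme_table k1 k2 rho sigma tau omega j i)^*) ->
    forall a, eigenvalue (adj rel i + adj rel i') a -> a \is Num.real.
  move=> conjP a /(eigenvalue_eigenP famE (char_tableD tabP i i')) [j ->].
  by rewrite conjP addC_conj_real.
have real12 := conj_pair_real I1 I2 (fun j => (scheme_table_conj_col _ _ _ _ j k1R k2R).1).
have real34 := conj_pair_real I3 I4 (fun j => (scheme_table_conj_col _ _ _ _ j k1R k2R).2).
have [S1 S2] := sym_adjE rel; have eig := eigenvalue_char_table famEt tabPt.
move: (eig J1 J1) (eig J2 J1) (eig J1 J2) (eig J2 J2).
table_simpl; rewrite S1 S2.
by move=> /real12 ? /real34 ? /real12 ? /real34 ?.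
Qed.

Lemma digraph_eigenvalues_of_type n (rel : 'I_n -> 'I_n -> 'I_5) cond :
  is_assoc_scheme rel -> skew_symmetric rel -> forces_distinct_eigenvalues cond ->
  char_table_of_type rel cond ->
  num_distinct_eigenvalues_eq
    (adj_mx (fun x y => Rel rel I1 x y || Rel rel I3 x y)) 5 /\
  num_distinct_eigenvalues_eq
    (adj_mx (fun x y => Rel rel I2 x y || Rel rel I4 x y)) 5.
Proof.
move=> scheme skew forces [Et [k1] [k2] [r1] [t1] [r2] [t2] [m1] [m2] [famEt tabPt _]].
case=> E [rho] [sigma] [tau] [omega] [famE tabP mults cond_holds].
have feasP : feasible_char_table n (scheme_table k1 k2 rho sigma tau omega) (fun j => \rank (E j)).
  apply: (feasible_scheme_char_table scheme famE tabP skew).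
  by rewrite -I0_ord0; apply: scheme_table_trivial_idem scheme famE tabP.
have [k1_gt0 k2_gt0] := scheme_table_valencies_gt0 feasP.
have reals := sym_table_real famE tabP (gtr0_real k1_gt0) (gtr0_real k2_gt0) famEt tabPt.
have uniq_theta := forces _ _ _ _ _ _ _ _ _ _ _ _ _ _ feasP mults reals cond_holds.
have I13 : I1 != I3 by rewrite -(inj_eq val_inj) /= val_I1 val_I3.
have I24 : I2 != I4 by rewrite -(inj_eq val_inj) /= val_I2 val_I4.
rewrite !adj_mx_orb //; split.
  exact: (num_distinct_eigenvalues_eigen famE (char_tableD tabP I1 I3) uniq_theta).
apply: (num_distinct_eigenvalues_eigen famE (char_tableD tabP I2 I4)).
have conj_theta j : scheme_table k1 k2 rho sigma tau omega j I2
    + scheme_table k1 k2 rho sigma tau omega j I4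
    = (scheme_table k1 k2 rho sigma tau omega j I1
       + scheme_table k1 k2 rho sigma tau omega j I3)^*.
  have [-> ->] := scheme_table_conj_col rho sigma tau omega j (gtr0_real k1_gt0) (gtr0_real k2_gt0).
  by rewrite rmorphD.
by rewrite (eq_map conj_theta) map_comp (map_inj_uniq (can_inj conjCK)).
Qed.

Theorem proposition4p2 (n : nat) (rel : 'I_n -> 'I_n -> 'I_5) :
  is_assoc_scheme rel ->
  skew_symmetric rel ->
  (forall x y, Rel rel I1 x y = Rel rel I2 y x) ->   (* R_1^T = R_2 *)
  (forall x y, Rel rel I3 x y = Rel rel I4 y x) ->   (* R_3^T = R_4 *)
  char_table_of_type rel type1_cond \/ char_table_of_type rel type2_cond ->
  (* digraphs (X, R_1 ∪ R_3) and (X, R_2 ∪ R_4) *)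
  num_distinct_eigenvalues_eq
    (adj_mx (fun x y => Rel rel I1 x y || Rel rel I3 x y)) 5 /\
  num_distinct_eigenvalues_eq
    (adj_mx (fun x y => Rel rel I2 x y || Rel rel I4 x y)) 5.
Proof.
(* The transposition pattern is already built into the shape of [scheme_table]. *)
move=> scheme skew _ _ [type1 | type2].
  exact: digraph_eigenvalues_of_type scheme skew type1_forces_distinct_eigenvalues type1.
exact: digraph_eigenvalues_of_type scheme skew type2_forces_distinct_eigenvalues type2.
Qed.
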